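(* Let $m\ge3$ be odd, $Q_{4m}=\langle a,b\mid a^m=1=b^4,\ b^{-1}ab=a^{-1}\rangle$, $s$ an odd prime with $\gcd(s,m)=1$, $q$ a power of $s$, and $\zeta$ a primitive $m$-th root of unity in $\overline{\mathbb{F}}_s$. Suppose $\theta:=\zeta+\zeta^{-1}\in\mathbb{F}_q$ and $\zeta\notin\mathbb{F}_q$. Let $\alpha,\beta\in\mathbb{F}_q$ satisfy $\alpha^2+\beta^2=\theta^2-4$, put $A=\begin{pmatrix}\alpha&\beta\\\beta&-\alpha\end{pmatrix}$, $\tilde A=\frac{\theta}{2}I+\frac12A$ and $B=\begin{pmatrix}0&-1\\1&0\end{pmatrix}$. Then $\beta\ne0$, the assignment $\mu(a)=\tilde A$, $\mu(b)=B$ defines a faithful irreducible representation $\mu:Q_{4m}\to GL_2(\mathbb{F}_q)$, and $\mu$ is equivalent over $\overline{\mathbb{F}}_s$ to the representation $\tau$ given by $\tau(a)=\begin{pmatrix}\zeta&0\\0&\zeta^{-1}\end{pmatrix}$, $\tau(b)=\begin{pmatrix}0&-1\\1&0\end{pmatrix}$.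
   Context: $\overline{\mathbb{F}}_s$ is an algebraic closure of $\mathbb{F}_s$, and $\mathbb{F}_q$ is its subfield with $q$ elements. *)

From HB Require Import structures.
From mathcomp Require Import all_boot all_order all_algebra all_fingroup all_field mxrepresentation.
Set Implicit Arguments. Unset Strict Implicit. Unset Printing Implicit Defensive.
Import GRing.Theory.
Local Open Scope ring_scope.

Definition mx2 (R : Type) (x y z w : R) : 'M[R]_2 :=
  \matrix_(i < 2, j < 2)
     if i == 0 :> nat then (if j == 0 :> nat then x else y)
     else (if j == 0 :> nat then z else w).

From HB Require Import structures.
From mathcomp Require Import all_boot all_order all_algebra all_fingroup all_field mxrepresentation.
From mathcomp Require Import ring.
Import GRing.Theory.
Local Open Scope ring_scope.

(* Put d = zeta - zeta^-1, so that d^2 = theta^2 - 4 = alpha^2 + beta^2.  Over the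
   closure the reflection A has eigenvalues d and -d, and its eigenvectors form a
   matrix P commuting with B; hence P conjugates Atilde = theta/2 + A/2 to
   diag(zeta, zeta^-1).  This gives Atilde^m = 1, the equivalence with tau, and,
   through tau, faithfulness.  As Atilde is symmetric of determinant
   (theta^2 - alpha^2 - beta^2)/4 = 1, Atilde B Atilde = B, the last relation of Q_4m.
   Finally zeta is not in F_q, so no x in F_q has x^2 = theta^2 - 4 (else
   (theta +- x)/2 = zeta): this forces beta != 0, and leaves Atilde without an
   eigenvalue in F_q, hence mu without an invariant line. *)

Set Implicit Arguments. Unset Strict Implicit. Unset Printing Implicit Defensive.

Lemma ord2P (i : 'I_2) : i = ord0 \/ i = ord_max.
Proof. by case: i => [[|[|i]] Hi] //; [left | right]; apply: val_inj. Qed.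

Lemma mx2P (R : Type) (M : 'M[R]_2) :
  M = mx2 (M ord0 ord0) (M ord0 ord_max) (M ord_max ord0) (M ord_max ord_max).
Proof. by apply/matrixP => i j; rewrite mxE; case: (ord2P i) => ->; case: (ord2P j) => ->. Qed.

Lemma mx2_mul (R : pzRingType) (x y z w x' y' z' w' : R) :
  mx2 x y z w *m mx2 x' y' z' w' =
  mx2 (x * x' + y * z') (x * y' + y * w') (z * x' + w * z') (z * y' + w * w').
Proof. by rewrite [LHS]mx2P !mxE !big_ord_recl !big_ord0 !mxE /= !addr0. Qed.

Lemma mx2_add (R : pzRingType) (x y z w x' y' z' w' : R) :
  mx2 x y z w + mx2 x' y' z' w' = mx2 (x + x') (y + y') (z + z') (w + w').
Proof. by rewrite [LHS]mx2P !mxE. Qed.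

Lemma mx2_scale (R : pzRingType) (k x y z w : R) :
  k *: mx2 x y z w = mx2 (k * x) (k * y) (k * z) (k * w).
Proof. by rewrite [LHS]mx2P !mxE. Qed.

Lemma scalar_mx2 (R : pzRingType) (k : R) : k%:M = mx2 k 0 0 k.
Proof. by rewrite [LHS]mx2P !mxE. Qed.

Lemma map_mx2 (aR rR : pzRingType) (f : {rmorphism aR -> rR}) (x y z w : aR) :
  map_mx f (mx2 x y z w) = mx2 (f x) (f y) (f z) (f w).
Proof. by rewrite [LHS]mx2P !mxE. Qed.

Lemma det_mx2 (R : comPzRingType) (x y z w : R) : \det (mx2 x y z w) = x * w - y * z.
Proof.
rewrite (expand_det_row _ ord0) !big_ord_recl big_ord0 addr0 /cofactor !det_mx11 !mxE /=.
by rewrite expr0 expr1 mul1r mulN1r mulrN.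
Qed.

Lemma mx2_diagX (R : comPzRingType) (x y : R) n :
  mx2 x 0 0 y ^+ n = mx2 (x ^+ n) 0 0 (y ^+ n).
Proof.
elim: n => [|n IH]; first by rewrite !expr0 -scalar_mx2.
by rewrite exprS IH -mulmxE mx2_mul !mul0r !mulr0 !addr0 !add0r -!exprS.
Qed.

Lemma mx2_diag_mul00 (R : pzRingType) (x y : R) (M : 'M[R]_2) :
  (mx2 x 0 0 y *m M) ord0 ord0 = x * M ord0 ord0.
Proof. by rewrite mxE !big_ord_recl big_ord0 !mxE /= mul0r !addr0. Qed.

Lemma mx2_rot_sqr (R : pzRingType) : mx2 0 (-1) 1 0 ^+ 2 = -1 :> 'M[R]_2.
Proof.
have -> : -1 = (-1)%:M :> 'M[R]_2 by rewrite raddfN.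
rewrite expr2 -mulmxE mx2_mul scalar_mx2.
by rewrite !(mul0r, mulr0, mul1r, mulr1, add0r, addr0, mulN1r, oppr0).
Qed.

Lemma mx2_rot_exp4 (R : pzRingType) : mx2 0 (-1) 1 0 ^+ 4 = 1 :> 'M[R]_2.
Proof. by rewrite -[4%N]/(2 * 2)%N exprM mx2_rot_sqr sqrrN expr1n. Qed.

Lemma mx2_rot_comm (R : comPzRingType) (x y : R) :
  mx2 0 (-1) 1 0 *m mx2 x y (- y) x = mx2 x y (- y) x *m mx2 0 (-1) 1 0.
Proof. by rewrite !mx2_mul; congr mx2; ring. Qed.

Lemma mx2_sym_rot (R : comPzRingType) (x y z : R) :
  mx2 x y y z *m mx2 0 (-1) 1 0 *m mx2 x y y z = (x * z - y * y) *: mx2 0 (-1) 1 0.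
Proof. by rewrite !mx2_mul mx2_scale; congr mx2; ring. Qed.

Lemma eigenvalue_mx2_diag (F : fieldType) (x y c : F) :
  eigenvalue (mx2 x 0 0 y) c -> c = x \/ c = y.
Proof.
have trig : is_trig_mx (mx2 x 0 0 y).
  by apply/is_trig_mxP => i j; case: (ord2P i) => ->; case: (ord2P j) => -> //; rewrite mxE.
rewrite eigenvalue_root_char char_poly_trig // !big_ord_recl big_ord0 mulr1 rootM.
by rewrite !root_XsubC !mxE /= => /orP[] /eqP; [left | right].
Qed.

Lemma eigenvalue_conj (F : fieldType) n (P g : 'M[F]_n.+1) (c : F) :
  P \in unitmx -> eigenvalue (P *m g *m invmx P) c = eigenvalue g c.
Proof.
move=> uP; rewrite !eigenvalue_root_min.
by rewrite (similar_mxminpoly uP (f := g) (g := P *m g *m invmx P)) //; apply/similarRL.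
Qed.

Lemma mx_irr2_eigenvalue_free (F : fieldType) (gT : finGroupType) (G : {group gT})
    (rG : mx_representation F G 2) (x : gT) :
  x \in G -> (forall c, ~~ eigenvalue (rG x) c) -> mx_irreducible rG.
Proof.
move=> Gx noeig; apply/mx_irrP; split=> // U modU nzU; apply: contraT => notfull.
have rankU : \rank U = 1%N.
  by apply/eqP; rewrite eqn_leq -ltnS ltn_neqAle notfull rank_leq_col lt0n mxrank_eq0.
pose v := nz_row U.
have Uv : (U <= v)%MS.
  by rewrite -(mxrank_leqif_sup (nz_row_sub U)).2 rankU rank_rV nz_row_eq0 nzU.
have [c vc] : exists c, v *m rG x = c *: v.
  apply/sub_rVP; apply: submx_trans Uv; apply: submx_trans (mxmoduleP modU x Gx).
  by rewrite submxMr ?nz_row_sub.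
have /negbTE <- := noeig c.
by apply/eigenvalueP; exists v; rewrite // nz_row_eq0.
Qed.

Lemma expr_conjmx (R : comUnitRingType) n (P M : 'M[R]_n) k : P \in unitmx ->
  (P *m M *m invmx P) ^+ k = P *m M ^+ k *m invmx P.
Proof.
move=> uP; elim: k => [|k IH]; first by rewrite !expr0 mulmx1 mulmxV.
by rewrite exprS IH -mulmxE !mulmxA mulmxKV // exprS -mulmxE !mulmxA.
Qed.

Lemma mx2_reflection_eigen (R : comPzRingType) (x y d : R) : x ^+ 2 + y ^+ 2 = d ^+ 2 ->
  mx2 x y y (- x) *m mx2 y (x - d) (d - x) y = mx2 y (x - d) (d - x) y *m mx2 d 0 0 (- d).
Proof.
move=> sum_sqr; rewrite !mx2_mul; congr mx2; try ring;
  by transitivity (x ^+ 2 + y ^+ 2 - x * d); [ring | rewrite sum_sqr; ring].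
Qed.

Lemma mx_rsim_rconj (F : fieldType) (gT : finGroupType) (G : {group gT}) n
    (rG : mx_representation F G n) (B : 'M_n) (uB : B \in unitmx) :
  mx_rsim rG (rconj_repr rG uB).
Proof.
apply: (MxReprSim (B := invmx B)) => // [|x Gx]; first by rewrite row_free_unit unitmx_inv.
by rewrite rconj_mxE !mulmxA mulVmx // mul1mx.
Qed.

Lemma pchar_odd_two_neq0 (R : nzRingType) p : p \in [pchar R] -> odd p -> (2 : R) != 0.
Proof.
move=> charRp; apply: contraL => /eqP two0.
suff /eqP -> : p == 2%N by [].
by rewrite -dvdn_prime2 ?(pcharf_prime charRp) // (dvdn_pcharf charRp) two0.
Qed.

Section Dicyclic.

Variables (m : nat) (gT : finGroupType) (G : {group gT}) (a b : gT).
Hypotheses (odd_m : odd m)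
  (Gpres : (G \isog Grp (x : y : (x ^+ m, y ^+ 4, x ^ y = x^-1)))%g)
  (Ggen : G = (<[a]> <*> <[b]>)%G)
  (am1 : (a ^+ m = 1)%g) (b4 : (b ^+ 4 = 1)%g) (ab_inv : (a ^ b = a^-1)%g).

Lemma mem_dicyclic_gen : a \in G /\ b \in G.
Proof. by rewrite Ggen; split; apply: mem_gen; rewrite inE cycle_id ?orbT. Qed.

Lemma dicyclic_mulE : (G : {set gT}) = (<[a]> * <[b]>)%g.
Proof.
rewrite Ggen /= norm_joinEr // cycle_subG.
by apply/normP; rewrite -cycleJ ab_inv cycleV.
Qed.

Section DicyclicHom.
Local Open Scope group_scope.

Lemma dicyclic_hom (rT : finGroupType) (x y : rT) :
    x ^+ m = 1 -> y ^+ 4 = 1 -> x ^ y = x^-1 ->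
  exists phi : gT -> rT,
    [/\ phi 1 = 1, {in G &, {morph phi : u v / u * v}}, phi a = x & phi b = y].
Proof.
(* The subgroup K of gT * rT generated by (a, x) and (b, y) satisfies the relations,
   so it is no larger than G, and its first projection onto G is injective. *)
move=> xm y4 xy; set K := (<[(a, x)]> <*> <[(b, y)]>)%G.
have pairX (u : gT) (v : rT) n : (u, v) ^+ n = (u ^+ n, v ^+ n).
  by elim: n => // n IH; rewrite !expgS IH.
have homK : K \homg Grp (x : y : (x ^+ m, y ^+ 4, x ^ y = x^-1)).
  apply/existsP; exists ((a, x), (b, y)) => /=.
  by rewrite (_ : (a, x) ^ (b, y) = (a ^ b, x ^ y)) // !pairX am1 xm b4 y4 ab_inv xy eqxx.
pose f := restrm (subsetT K) (fst_morphism gT rT).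
have fK : f @* K = G.
  rewrite morphim_restrm setIid /K morphimY ?cycle_subG ?inE //.
  by rewrite !morphim_cycle ?inE // Ggen.
have injf : 'injm f.
  apply/injmP; apply/imset_injP; rewrite -morphimEdom fK eqn_leq.
  have KG : (#|K| <= #|G|)%N by apply: leq_homg; rewrite Gpres.
  by rewrite KG -{1}fK leq_morphim.
exists (fun g => (invm injf g).2); split=> /=.
- by rewrite morph1.
- by move=> u v; rewrite -fK => Gu Gv; rewrite morphM.
- by rewrite -[a]/(f (a, x)) invmE // mem_gen // inE cycle_id.
- by rewrite -[b]/(f (b, y)) invmE // mem_gen // inE cycle_id orbT.
Qed.

End DicyclicHom.

Lemma dicyclic_repr (R : finComUnitRingType) n (X Y : 'M[R]_n.+1) :
    X ^+ m = 1 -> Y ^+ 4 = 1 -> X * Y * X = Y ->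
  exists rG : mx_representation R G n.+1, rG a = X /\ rG b = Y.
Proof.
move=> Xm Y4 XYX.
have uX : X \is a GRing.unit.
  by apply/unitrP; exists (X ^+ m.-1); rewrite -exprS -exprSr prednK ?odd_gt0 // Xm.
have uY : Y \is a GRing.unit by apply/unitrP; exists (Y ^+ 3); rewrite -exprS -exprSr Y4.
pose gX : {'GL_n.+1[R]} := FinRing.unit _ uX.
pose gY : {'GL_n.+1[R]} := FinRing.unit _ uY.
have gXm : (gX ^+ m = 1)%g by apply: val_inj; rewrite FinRing.val_unitX /= Xm.
have gY4 : (gY ^+ 4 = 1)%g by apply: val_inj; rewrite FinRing.val_unitX /= Y4.
have gXY : (gX ^ gY = gX^-1)%g.
  have gXY : (gX * gY = gY * gX^-1)%g.
    by apply: (canRL (mulgK gX)); apply: val_inj; rewrite !FinRing.val_unitM /= XYX.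
  by rewrite /conjg gXY mulKg.
have [phi [phi1 phiM phia phib]] := dicyclic_hom gXm gY4 gXY.
have phi_repr : mx_repr G (fun g => GLval (phi g)).
  by split=> [|u v Gu Gv]; rewrite ?phi1 // phiM // GL_MxE.
by exists (MxRepresentation phi_repr); rewrite /= phia phib.
Qed.

Lemma dicyclic_faithful (K : fieldType) (rG : mx_representation K G 2) (zeta : K) :
    m.-primitive_root zeta -> (2 : K) != 0 ->
    rG a = mx2 zeta 0 0 zeta^-1 -> rG b = mx2 0 (-1) 1 0 ->
  mx_faithful rG.
Proof.
move=> prim_zeta two_nz rGa rGb; have [Ga Gb] := mem_dicyclic_gen.
apply/subsetP => g /rkerP [Gg]; rewrite inE.
have : g \in (<[a]> * <[b]>)%g by rewrite -dicyclic_mulE.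
case/mulsgP => _ _ /cycleP [i ->] /cycleP [j ->] ->.
rewrite -(expg_mod j b4) repr_mxM ?groupX // !repr_mxX // rGa rGb mx2_diagX.
have : (j %% 4 < 4)%N by rewrite ltn_pmod.
move: (j %% 4)%N => r lt_r4 /(congr1 (fun M : 'M_2 => M ord0 ord0)).
rewrite mx2_diag_mul00 mxE /=.
case: r lt_r4 => [|[|[|[|r]]]] // _.
- rewrite expr0 mxE mulr1 => /eqP; rewrite -(prim_order_dvd prim_zeta) => /dvdnP [k ->].
  by rewrite expg0 mulg1 mulnC expgM am1 expg1n.
- by rewrite expr1 mxE mulr0 => /eqP; rewrite eq_sym oner_eq0.
- rewrite mx2_rot_sqr !mxE mulrN1 => /eqP; rewrite eqr_oppLR => /eqP zeta_i.
  have : (m %| i * 2)%N by rewrite (prim_order_dvd prim_zeta) exprM zeta_i sqrrN expr1n.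
  rewrite Gauss_dvdl ?coprimen2 // (prim_order_dvd prim_zeta) zeta_i => /eqP m1.
  by move: two_nz; rewrite mulr2n -{1}m1 addNr eqxx.
- by rewrite exprS mx2_rot_sqr mulrN1 !mxE oppr0 mulr0 => /eqP; rewrite eq_sym oner_eq0.
Qed.

End Dicyclic.

Section Diagonalization.

Variables (F L : fieldType) (f : {rmorphism F -> L}) (zeta : L) (theta alpha beta : F).
Hypotheses (Htheta : f theta = zeta + zeta^-1) (zeta_notin : forall x, f x != zeta)
  (sum_sqr : alpha ^+ 2 + beta ^+ 2 = theta ^+ 2 - 4) (two_nz : (2 : F) != 0).

Local Notation d := (zeta - zeta^-1).
Local Notation Atilde := ((theta / 2)%:M + 2^-1 *: mx2 alpha beta beta (- alpha)).
Local Notation P := (mx2 (f beta) (f alpha - d) (d - f alpha) (f beta)).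

Let two_nzL : (2 : L) != 0.
Proof. by rewrite -(rmorph_nat f) fmorph_eq0. Qed.

Lemma zeta_neq0 : zeta != 0.
Proof. by have := zeta_notin 0; rewrite rmorph0 eq_sym. Qed.

Lemma rmorph_disc : f (theta ^+ 2 - 4) = d ^+ 2.
Proof.
have zetaV : zeta * zeta^-1 = 1 by rewrite mulfV ?zeta_neq0.
rewrite rmorphB rmorphXn rmorph_nat Htheta.
transitivity (d ^+ 2 + 4 * (zeta * zeta^-1 - 1)); first by ring.
by rewrite zetaV subrr mulr0 addr0.
Qed.

Lemma sqr_neq_disc x : x ^+ 2 != theta ^+ 2 - 4.
Proof.
have half_zeta y : f y = d -> f ((theta + y) / 2) = zeta.
  move=> fy; rewrite fmorph_div rmorphD rmorph_nat Htheta fy.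
  by field; rewrite two_nzL zeta_neq0.
apply/negP => /eqP sqr_x.
have : (f x - d) * (f x + d) == 0 by rewrite -subr_sqr -rmorphXn sqr_x rmorph_disc subrr.
rewrite mulf_eq0 subr_eq0 addr_eq0 => /orP[] /eqP fx.
  by have := zeta_notin ((theta + x) / 2); rewrite half_zeta ?eqxx.
by have := zeta_notin ((theta - x) / 2); rewrite half_zeta ?eqxx // rmorphN fx opprK.
Qed.

Lemma beta_neq0 : beta != 0.
Proof.
apply/eqP => beta0; move: sum_sqr; rewrite beta0 expr0n addr0 => /eqP.
exact/negP/sqr_neq_disc.
Qed.

Lemma rmorph_neq_d x : f x != d.
Proof.
apply/negP => /eqP fx; have /eqP := sqr_neq_disc x; apply.
by apply: (fmorph_inj f); rewrite rmorph_disc rmorphXn fx.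
Qed.

Lemma rmorph_sum_sqr : f alpha ^+ 2 + f beta ^+ 2 = d ^+ 2.
Proof. by rewrite -rmorph_disc -sum_sqr rmorphD !rmorphXn. Qed.

Lemma unitmx_diagonalizer : P \in unitmx.
Proof.
rewrite unitmxE.
have -> : \det P = (f alpha ^+ 2 + f beta ^+ 2 - d ^+ 2) + d * (d - f alpha) * 2.
  by rewrite det_mx2; ring.
rewrite rmorph_sum_sqr subrr add0r unitfE !mulf_neq0 // ?two_nzL //.
  by have := rmorph_neq_d 0; rewrite rmorph0 eq_sym.
by rewrite subr_eq0 eq_sym rmorph_neq_d.
Qed.

Lemma map_Atilde_diag : map_mx f Atilde = P *m mx2 zeta 0 0 zeta^-1 *m invmx P.
Proof.
apply: (canRL (mulmxK unitmx_diagonalizer)).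
rewrite map_mxD map_scalar_mx map_mxZ map_mx2 fmorph_div fmorphV rmorph_nat rmorphN.
rewrite mulmxDl mul_scalar_mx -scalemxAl mx2_reflection_eigen ?rmorph_sum_sqr // scalemxAr.
rewrite -[_ *: P]mul_mx_scalar -mulmxDr; congr (_ *m _).
rewrite scalar_mx2 mx2_scale mx2_add Htheta; congr mx2; try by field; rewrite two_nzL zeta_neq0.
all: by rewrite !mulr0 addr0.
Qed.

Lemma mx2_rot_diagonalizer_comm : mx2 0 (-1) 1 0 *m P = P *m mx2 0 (-1) 1 0.
Proof. by rewrite -[d - f alpha]opprB mx2_rot_comm. Qed.

Lemma Atilde_mx2E :
  Atilde = mx2 ((theta + alpha) / 2) (beta / 2) (beta / 2) ((theta - alpha) / 2).
Proof. by rewrite scalar_mx2 mx2_scale mx2_add; congr mx2; field. Qed.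

Lemma Atilde_rot_Atilde : Atilde * mx2 0 (-1) 1 0 * Atilde = mx2 0 (-1) 1 0.
Proof.
rewrite -!mulmxE Atilde_mx2E mx2_sym_rot -[RHS]scale1r; congr (_ *: _).
have four_nz : (4 : F) != 0 by rewrite -[4%N]/(2 * 2)%N natrM mulf_neq0.
transitivity ((theta ^+ 2 - (alpha ^+ 2 + beta ^+ 2)) / 4); first by field; rewrite four_nz.
by rewrite sum_sqr opprB addrC subrK divff.
Qed.

Lemma Atilde_expr_eq1 m : zeta ^+ m = 1 -> Atilde ^+ m = 1.
Proof.
move=> zeta_m; apply: (map_mx_inj (f := f)).
rewrite map_mx1 rmorphXn /= map_Atilde_diag expr_conjmx ?unitmx_diagonalizer // mx2_diagX.
by rewrite exprVn zeta_m invr1 -scalar_mx2 mulmx1 mulmxV // unitmx_diagonalizer.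
Qed.

Lemma Atilde_eigenvalue_free c : ~~ eigenvalue Atilde c.
Proof.
rewrite -(eigenvalue_map f) map_Atilde_diag eigenvalue_conj ?unitmx_diagonalizer //.
apply/negP => /eigenvalue_mx2_diag [] fc.
  by have := zeta_notin c; rewrite fc eqxx.
by have := zeta_notin c^-1; rewrite fmorphV fc invrK eqxx.
Qed.

End Diagonalization.

Unset Implicit Arguments. Set Strict Implicit. Set Printing Implicit Defensive.

Theorem mainTheorem7
  (* the quaternion-type group Q_{4m} = < a, b | a^m = 1 = b^4, b^-1 a b = a^-1 > *)
  (m : nat) (Hm3 : (3 <= m)%N) (Hmodd : odd m)
  (gT : finGroupType) (G : {group gT}) (a b : gT)
  (HGpres : (G \isog Grp (x : y : (x ^+ m, y ^+ 4, x ^ y = x^-1)))%g)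
  (HGgen : G = (<[a]> <*> <[b]>)%G)
  (Ha : (a ^+ m = 1)%g) (Hb : (b ^+ 4 = 1)%g) (Hab : (a ^ b = a^-1)%g)
  (* s odd prime, coprime to m; F = F_q a finite field of characteristic s *)
  (s : nat) (Hs : prime s) (Hsodd : odd s) (Hsm : coprime s m)
  (F : finFieldType) (HcharF : s \in [pchar F])
  (* L = an algebraic closure of F_s (and of F), F embedded via f *)
  (L : closedFieldType) (f : {rmorphism F -> L})
  (HLalg : forall z : L, exists p : {poly F}, p != 0 /\ root (map_poly f p) z)
  (zeta : L) (Hzeta : m.-primitive_root zeta)
  (theta : F) (Htheta : f theta = zeta + zeta^-1)
  (HzetaF : forall x : F, f x != zeta)
  (alpha beta : F) (Hab2 : alpha ^+ 2 + beta ^+ 2 = theta ^+ 2 - 4) :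
  let A := mx2 alpha beta beta (- alpha) in
  let At := (theta / 2)%:M + 2^-1 *: A in
  let B := mx2 (0 : F) (-1) 1 0 in
  beta != 0 /\
  exists mu : mx_representation F G 2,
    [/\ mu a = At, mu b = B, mx_faithful mu, mx_irreducible mu &
        exists tau : mx_representation L G 2,
          [/\ tau a = mx2 zeta 0 0 zeta^-1, tau b = mx2 (0 : L) (-1) 1 0
            & mx_rsim (map_repr f mu) tau]].
Proof.
move=> A At B.
have two_nz : (2 : F) != 0 := pchar_odd_two_neq0 HcharF Hsodd.
have two_nzL : (2 : L) != 0 by rewrite -(rmorph_nat f) fmorph_eq0.
have [Ga _] := mem_dicyclic_gen HGgen.
split; first exact: beta_neq0 Htheta HzetaF Hab2 two_nz.
have [mu [mua mub]] := dicyclic_repr Hmodd HGpres HGgen Ha Hb Hab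
  (Atilde_expr_eq1 Htheta HzetaF Hab2 two_nz (prim_expr_order Hzeta))
  (mx2_rot_exp4 _) (Atilde_rot_Atilde Hab2 two_nz).
have uP := unitmx_diagonalizer Htheta HzetaF Hab2 two_nz.
have uQ := uP; rewrite -unitmx_inv in uQ.
pose tau := rconj_repr (map_repr f mu) uQ.
have taua : tau a = mx2 zeta 0 0 zeta^-1.
  rewrite rconj_mxE map_reprE mua (map_Atilde_diag Htheta HzetaF Hab2 two_nz) invmxK.
  by rewrite !mulmxA mulVmx // mul1mx mulmxKV.
have taub : tau b = mx2 0 (-1) 1 0.
  rewrite rconj_mxE map_reprE mub map_mx2 rmorph0 rmorphN rmorph1 invmxK.
  by rewrite -mulmxA (mx2_rot_diagonalizer_comm f zeta) mulKmx.
exists mu; split=> //.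
- have := dicyclic_faithful Hmodd HGgen Ha Hb Hab Hzeta two_nzL taua taub.
  by rewrite /tau conj_mx_faithful map_mx_faithful.
- apply: (mx_irr2_eigenvalue_free Ga); rewrite mua.
  exact: Atilde_eigenvalue_free Htheta HzetaF Hab2 two_nz.
- by exists tau; split=> //; exact: mx_rsim_rconj.
Qed.
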